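(* Let $\mathcal S=(s_\alpha)_{\alpha\in L(\omega_1)}$ be a ladder system on $\omega_1$ and let $K_{\mathcal S}=\omega_1\cup\{\infty\}$ be the associated ladder system space. Let $A$ be a nonstationary subset of $L(\omega_1)$ and let $\xi:A\to L(\omega_1)$ be an injective map. Then $\xi$ extends to a continuous map $\phi:K_{\mathcal S}\to K_{\mathcal S}$ such that $\phi(\infty)=\infty$ and $\phi(\alpha)=\infty$ for every $\alpha\in L(\omega_1)\setminus A$.
   Context: $L(\omega_1)$ denotes the set of limit ordinals in $\omega_1$ (the first uncountable ordinal) and $S(\omega_1)=\omega_1\setminus L(\omega_1)$. A ladder system on $\omega_1$ is a family $\mathcal S=(s_\alpha)_{\alpha\in L(\omega_1)}$ where for each limit $\alpha$, $s_\alpha=\{s^n_\alpha:n\in\omega\}$ and $(s^n_\alpha)_{n\in\omega}$ is a strictly increasing sequence in $S(\omega_1)$ converging (in the order sense) to $\alpha$. The ladder system topology $\tau_{\mathcal S}$ on $\omega_1$ is the topology in which every element of $S(\omega_1)$ is isolated and the basic neighborhoods of a limit ordinal $\alpha$ are the sets $\{\alpha\}\cup B$ with $B$ a cofinite subset of $s_\alpha$. This is a locally compact Hausdorff space, and $K_{\mathcal S}=\omega_1\cup\{\infty\}$ is its one-point compactification. A subset of $\omega_1$ is nonstationary if it is disjoint from some closed unbounded subset of $\omega_1$. *)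

(* omega_1 is modelled abstractly: any strictly well-ordered,
   uncountable type all of whose proper initial segments are countable
   (this characterizes omega_1 up to order isomorphism). *)
From Stdlib Require Import List.

Record Omega1 : Type := {
  ocarrier :> Type;
  olt : ocarrier -> ocarrier -> Prop;
  olt_irrefl : forall x, ~ olt x x;
  olt_trans : forall x y z, olt x y -> olt y z -> olt x z;
  olt_total : forall x y, olt x y \/ x = y \/ olt y x;
  olt_wf : well_founded olt;
  o_uncountable : ~ exists f : ocarrier -> nat, forall x y, f x = f y -> x = y;
  o_initial_countable : forall a, exists f : ocarrier -> nat,
      forall x y, olt x a -> olt y a -> f x = f y -> x = y
}.

Section Defs.
Variable W : Omega1.
Notation "x < y" := (olt W x y).

Definition ole (x y : W) : Prop := x < y \/ x = y.

Definition is_limit (a : W) : Prop :=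
  (exists b, b < a) /\ forall b, b < a -> exists c, b < c /\ c < a.

(* s : W -> nat -> W, where s a n = s^n_a (only meaningful for limit a) *)
Definition ladder_system (s : W -> nat -> W) : Prop :=
  forall a, is_limit a ->
    (forall n, ~ is_limit (s a n)) /\
    (forall n m, (n < m)%nat -> s a n < s a m) /\
    (forall n, s a n < a) /\
    (forall b, b < a -> exists n, b < s a n).

Definition ls_open (s : W -> nat -> W) (U : W -> Prop) : Prop :=
  forall a, is_limit a -> U a -> exists N, forall n, (N <= n)%nat -> U (s a n).

Definition ls_compact (s : W -> nat -> W) (C : W -> Prop) : Prop :=
  forall (I : Type) (U : I -> W -> Prop),
    (forall i, ls_open s (U i)) ->
    (forall x, C x -> exists i, U i x) ->
    exists l : list I, forall x, C x -> exists i, In i l /\ U i x.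

(* K_S = omega_1 ∪ {∞}, with None = ∞; open sets of the one-point
   compactification: open sets of omega_1, and sets containing ∞ whose
   trace on omega_1 is open with compact complement. *)
Definition K_open (s : W -> nat -> W) (V : option W -> Prop) : Prop :=
  ls_open s (fun x => V (Some x)) /\
  (V None -> ls_compact s (fun x => ~ V (Some x))).

Definition K_continuous (s : W -> nat -> W) (phi : option W -> option W) : Prop :=
  forall V, K_open s V -> K_open s (fun x => V (phi x)).

Definition club (C : W -> Prop) : Prop :=
  (forall a, exists c, C c /\ ole a c) /\
  (forall a, is_limit a -> (forall b, b < a -> exists c, C c /\ b < c /\ c < a) -> C a).

Definition nonstationary (A : W -> Prop) : Prop :=
  exists C, club C /\ forall x, C x -> ~ A x.

End Defs.

From Stdlib Require Import List Arith Lia Classical ClassicalEpsilon.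

(* A club [C] disjoint from [A] cuts [A] into blocks lying between consecutive points
   of [C]; each block is countable. Inside a block, enumerate it and cut each ladder so
   that it avoids the finitely many earlier ones; across blocks, cut the ladder of [a]
   above the last point of [C] below [a]. The resulting tails are pairwise disjoint, so
   [a] and its tail can be sent to [xi a] and everything else to [∞]. Continuity at a
   limit outside [A] holds because a neighbourhood of [∞] misses only finitely many
   limits, hence (by injectivity of [xi]) only the images of finitely many ladders, and
   two distinct ladders meet only finitely often. *)

Lemma finite_preimage {X Y : Type} (P : X -> Prop) (f : X -> Y) :
  (forall x y, P x -> P y -> f x = f y -> x = y) ->
  forall l : list Y, exists F : list X,
    (forall x, In x F -> P x /\ In (f x) l) /\
    (forall x, P x -> In (f x) l -> In x F).
Proof.
  intros f_inj l; induction l as [|y l [F [F_sub F_sup]]].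
  - exists nil; split; [intros x []|intros x _ []].
  - destruct (classic (exists x, P x /\ f x = y)) as [[x0 [Px0 <-]]|no_pre].
    + exists (x0 :: F); split.
      * intros x [<-|inF]; [split; simpl; auto|].
        destruct (F_sub x inF); split; simpl; auto.
      * intros x Px [e|inl]; [left; apply f_inj; auto|right; auto].
    + exists F; split.
      * intros x inF; destruct (F_sub x inF); split; simpl; auto.
      * intros x Px [e|inl]; [exfalso; eauto|auto].
Qed.

Section Ladders.

Variable W : Omega1.
Local Notation "x <o y" := (olt W x y) (at level 70).
Variable s : W -> nat -> W.
Hypothesis s_ladder : ladder_system W s.

Lemma olt_neq (x y : W) : x <o y -> x <> y.
Proof. intros lt_xy ->; exact (olt_irrefl W y lt_xy). Qed.

Lemma ladder_not_limit a n : is_limit W a -> ~ is_limit W (s a n).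
Proof. intro La; exact (proj1 (s_ladder a La) n). Qed.

Lemma ladder_lt a n : is_limit W a -> s a n <o a.
Proof. intro La; exact (proj1 (proj2 (proj2 (s_ladder a La))) n). Qed.

Lemma ladder_eventually_gt a b : is_limit W a -> b <o a ->
  exists N, forall n, (N <= n)%nat -> b <o s a n.
Proof.
  intros La ba.
  destruct (s_ladder a La) as [_ [s_incr [_ s_cof]]].
  destruct (s_cof b ba) as [N bN]; exists N; intros n Nn.
  destruct (le_lt_eq_dec _ _ Nn) as [lt_Nn|<-]; [|exact bN].
  exact (olt_trans W _ _ _ bN (s_incr _ _ lt_Nn)).
Qed.

(* Points below [a] are eventually passed by the ladder, points above it are never reached. *)
Lemma ladder_eventually_avoids a (L : list W) : is_limit W a -> ~ In a L ->
  exists N, forall n, (N <= n)%nat -> ~ In (s a n) L.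
Proof.
  intro La; induction L as [|x L IH]; intro a_L.
  - exists 0; intros n _ [].
  - destruct IH as [N HN]; [intro; apply a_L; right; auto|].
    destruct (olt_total W x a) as [xa|[<-|ax]].
    + destruct (ladder_eventually_gt a x La xa) as [N' HN'].
      exists (max N N'); intros n Nn [e|inL].
      * apply (olt_neq x (s a n)); [apply HN'; lia|auto].
      * apply (HN n); [lia|auto].
    + exfalso; apply a_L; left; auto.
    + exists N; intros n Nn [e|inL].
      * apply (olt_neq (s a n) x); [exact (olt_trans W _ _ _ (ladder_lt a n La) ax)|auto].
      * apply (HN n); [lia|auto].
Qed.

Lemma ladder_tails_disjoint a b : is_limit W a -> is_limit W b -> a <> b ->
  exists N, forall n, (N <= n)%nat -> forall m, s a n <> s b m.
Proof.
  intros La Lb ab.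
  destruct (olt_total W a b) as [lt_ab|[eq_ab|lt_ba]]; [|contradiction|].
  - destruct (ladder_eventually_gt b a Lb lt_ab) as [M HM].
    destruct (ladder_eventually_avoids a (map (s b) (seq 0 M)) La) as [N HN].
    + intros inL; apply in_map_iff in inL as [m [e _]].
      exact (ladder_not_limit b m Lb ltac:(rewrite e; exact La)).
    + exists N; intros n Nn m e.
      destruct (lt_dec m M) as [mM|Mm].
      * apply (HN n Nn); rewrite e; apply in_map, in_seq; lia.
      * apply (olt_neq (s a n) (s b m)); [|exact e].
        exact (olt_trans W _ _ _ (ladder_lt a n La) (HM m ltac:(lia))).
  - destruct (ladder_eventually_gt a b La lt_ba) as [N HN].
    exists N; intros n Nn m e.
    apply (olt_neq (s b m) (s a n)); [|auto].
    exact (olt_trans W _ _ _ (ladder_lt b m Lb) (HN n Nn)).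
Qed.

Lemma ladder_tail_avoids_ladders a (F : list W) : is_limit W a ->
  (forall b, In b F -> is_limit W b /\ b <> a) ->
  exists N, forall n, (N <= n)%nat -> forall b m, In b F -> s a n <> s b m.
Proof.
  intro La; induction F as [|b F IH]; intro HF.
  - exists 0; intros n _ b m [].
  - destruct IH as [N HN]; [intros c inF; apply HF; right; auto|].
    destruct (HF b (or_introl eq_refl)) as [Lb ba].
    destruct (ladder_tails_disjoint a b La Lb (not_eq_sym ba)) as [N' HN'].
    exists (max N N'); intros n Nn c m [<-|inF].
    + apply HN'; lia.
    + apply HN; [lia|auto].
Qed.

Lemma countable_ladders_disjoint_tails (P : W -> Prop) (e : W -> nat) :
  (forall a, P a -> is_limit W a) ->
  (forall a b, P a -> P b -> e a = e b -> a = b) ->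
  exists N : W -> nat, forall a b, P a -> P b -> a <> b ->
    forall n m, (N a <= n)%nat -> (N b <= m)%nat -> s a n <> s b m.
Proof.
  intros P_limit e_inj.
  assert (earlier : forall a, exists N, P a -> forall b, P b -> (e b < e a)%nat ->
            forall n, (N <= n)%nat -> forall m, s a n <> s b m).
  { intro a; destruct (classic (P a)) as [Pa|nPa]; [|exists 0; tauto].
    destruct (finite_preimage P e e_inj (seq 0 (e a))) as [F [F_sub F_sup]].
    destruct (ladder_tail_avoids_ladders a F (P_limit a Pa)) as [N HN].
    - intros b inF; destruct (F_sub b inF) as [Pb eb]; split; [auto|].
      intros ->; apply in_seq in eb; lia.
    - exists N; intros _ b Pb eb n Nn m.
      apply (HN n Nn b m), F_sup, in_seq; [auto|lia]. }
  destruct (choice _ earlier) as [N HN]; exists N.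
  intros a b Pa Pb ab n m Nn Nm.
  assert (e a <> e b) by (intro; apply ab, e_inj; auto).
  destruct (lt_dec (e b) (e a)) as [ba|ab'].
  - exact (HN a Pa b Pb ba n Nn m).
  - apply not_eq_sym, (HN b Pb a Pa ltac:(lia) m Nm n).
Qed.

Definition ladder_closure (b x : W) : Prop := x = b \/ exists n, s b n = x.

Lemma compact_limits_finite K : ls_compact W s K ->
  exists l, forall x, K x -> is_limit W x -> In x l.
Proof.
  intros K_compact.
  destruct (K_compact W (fun i x => x = i \/ (is_limit W i /\ exists n, s i n = x)))
    as [l Hl].
  - intros i a La [->|[Li [n <-]]].
    + exists 0; intros n _; right; eauto.
    + exfalso; exact (ladder_not_limit i n Li La).
  - intros x _; exists x; left; reflexivity.
  - exists l; intros x Kx Lx.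
    destruct (Hl x Kx) as [i [il [->|[Li [n <-]]]]]; [auto|].
    exfalso; exact (ladder_not_limit i n Li Lx).
Qed.

Lemma ladder_closure_finite_subcover (Q : W -> Prop) b (I : Type) (U : I -> W -> Prop) :
  is_limit W b -> Q b ->
  (forall i, ls_open W s (U i)) -> (forall x, Q x -> exists i, U i x) ->
  exists l, forall x, Q x -> ladder_closure b x -> exists i, In i l /\ U i x.
Proof.
  intros Lb Qb U_open U_cover.
  destruct (U_cover b Qb) as [i0 U0b].
  destruct (U_open i0 b Lb U0b) as [N HN].
  assert (initial : forall k, exists l, forall n, (n < k)%nat -> Q (s b n) ->
            exists i, In i l /\ U i (s b n)).
  { induction k as [|k [l IH]].
    - exists nil; intros; lia.
    - destruct (classic (Q (s b k))) as [Qk|nQk].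
      + destruct (U_cover _ Qk) as [ik Uk]; exists (ik :: l); intros n nk Qn.
        destruct (Nat.eq_dec n k) as [->|ne]; [exists ik; split; simpl; auto|].
        destruct (IH n ltac:(lia) Qn) as [i [il Ui]]; exists i; split; simpl; auto.
      + exists l; intros n nk Qn.
        destruct (Nat.eq_dec n k) as [->|ne]; [contradiction|apply IH; auto; lia]. }
  destruct (initial N) as [l Hl]; exists (i0 :: l).
  intros x Qx [->|[n <-]]; [exists i0; split; simpl; auto|].
  destruct (lt_dec n N) as [nN|Nn].
  - destruct (Hl n nN Qx) as [i [il Ui]]; exists i; split; simpl; auto.
  - exists i0; split; simpl; auto; apply HN; lia.
Qed.

Lemma compact_of_ladder_closures (Q : W -> Prop) (F : list W) :
  (forall b, In b F -> is_limit W b /\ Q b) ->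
  (forall x, Q x -> exists b, In b F /\ ladder_closure b x) ->
  ls_compact W s Q.
Proof.
  intros HF Q_sub I U U_open U_cover.
  enough (HF' : exists l, forall x, Q x -> (exists b, In b F /\ ladder_closure b x) ->
                  exists i, In i l /\ U i x)
    by (destruct HF' as [l Hl]; exists l; auto).
  clear Q_sub; induction F as [|b F IH].
  - exists nil; intros x _ [b [[] _]].
  - destruct (HF b (or_introl eq_refl)) as [Lb Qb].
    destruct (ladder_closure_finite_subcover Q b I U Lb Qb U_open U_cover) as [l1 H1].
    destruct IH as [l2 H2]; [intros c inF; apply HF; right; auto|].
    exists (l1 ++ l2); intros x Qx [c [[<-|inF] cx]].
    + destruct (H1 x Qx cx) as [i [il Ui]]; exists i; split; [apply in_or_app|]; auto.
    + destruct (H2 x Qx (ex_intro _ c (conj inF cx))) as [i [il Ui]].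
      exists i; split; [apply in_or_app|]; auto.
Qed.

End Ladders.

Section Clubs.

Variable W : Omega1.
Local Notation "x <o y" := (olt W x y) (at level 70).
Variable C : W -> Prop.
Hypothesis C_club : club W C.

Lemma exists_olt_minimal (P : W -> Prop) :
  (exists x, P x) -> exists x, P x /\ forall y, P y -> ~ y <o x.
Proof.
  intros [x0 Px0]; apply NNPP; intro no_min.
  enough (no_P : forall x, ~ P x) by exact (no_P x0 Px0).
  intro x; induction x as [x IH] using (well_founded_ind (olt_wf W)); intro Px.
  apply no_min; exists x; split; [auto|]; intros y Py yx; exact (IH y yx Py).
Qed.

Definition least_above (a c : W) : Prop :=
  C c /\ a <o c /\ forall c', C c' -> a <o c' -> ~ c' <o c.

Lemma club_least_above a : ~ C a -> exists c, least_above a c.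
Proof.
  intro nCa.
  destruct (exists_olt_minimal (fun c => C c /\ a <o c)) as [c [[Cc ac] c_min]].
  - destruct (proj1 C_club a) as [c [Cc [ac|<-]]]; [eauto|contradiction].
  - exists c; split; [|split]; auto; intros c' Cc' ac'; apply c_min; auto.
Qed.

Lemma club_gap a : is_limit W a -> ~ C a ->
  exists b, b <o a /\ forall c, C c -> b <o c -> ~ c <o a.
Proof.
  intros La nCa; apply NNPP; intro no_gap.
  apply nCa, (proj2 C_club a La); intros b ba.
  apply NNPP; intro no_c; apply no_gap; exists b; split; [auto|].
  intros c Cc bc ca; apply no_c; eauto.
Qed.

Lemma least_above_lt a b ca cb : least_above a ca -> least_above b cb ->
  a <o b -> ~ C b -> ca <> cb -> ca <o b.
Proof.
  intros [Cca [a_ca ca_min]] [Ccb [b_cb cb_min]] ab nCb ne.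
  destruct (olt_total W ca b) as [lt|[<-|b_ca]]; [auto|contradiction|].
  exfalso; destruct (olt_total W ca cb) as [lt|[eq|gt]].
  - exact (cb_min ca Cca b_ca lt).
  - exact (ne eq).
  - exact (ca_min cb Ccb (olt_trans W _ _ _ ab b_cb) gt).
Qed.

Lemma least_above_le_gap a b ca cb g : least_above a ca -> least_above b cb ->
  a <o b -> ~ C b -> ca <> cb -> (forall c, C c -> g <o c -> ~ c <o b) -> ole W ca g.
Proof.
  intros a_ca b_cb ab nCb ne b_gap.
  destruct (olt_total W ca g) as [lt|[eq|gt]]; [left|right|]; auto.
  exfalso; exact (b_gap ca (proj1 a_ca) gt (least_above_lt a b ca cb a_ca b_cb ab nCb ne)).
Qed.

End Clubs.

Lemma nonstationary_disjoint_tails (W : Omega1) (s : W -> nat -> W) (A : W -> Prop) :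
  ladder_system W s -> (forall a, A a -> is_limit W a) -> nonstationary W A ->
  exists N : W -> nat, forall a b, A a -> A b -> a <> b ->
    forall n m, (N a <= n)%nat -> (N b <= m)%nat -> s a n <> s b m.
Proof.
  intros s_ladder A_limit [C [C_club C_A]].
  assert (nCA : forall a, A a -> ~ C a) by (intros a Aa Ca; exact (C_A a Ca Aa)).
  destruct (choice (fun a c => A a -> least_above W C a c)) as [next next_spec].
  { intro a; destruct (classic (A a)) as [Aa|nAa]; [|exists a; tauto].
    destruct (club_least_above W C C_club a (nCA a Aa)) as [c Hc]; eauto. }
  destruct (choice (fun a b => A a ->
              olt W b a /\ forall c, C c -> olt W b c -> ~ olt W c a)) as [gap gap_spec].
  { intro a; destruct (classic (A a)) as [Aa|nAa]; [|exists a; tauto].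
    destruct (club_gap W C C_club a (A_limit a Aa) (nCA a Aa)) as [b Hb]; eauto. }
  destruct (choice (fun a M => A a -> forall n, (M <= n)%nat -> olt W (gap a) (s a n)))
    as [M M_spec].
  { intro a; destruct (classic (A a)) as [Aa|nAa]; [|exists 0; tauto].
    destruct (ladder_eventually_gt W s s_ladder a (gap a) (A_limit a Aa)) as [M HM];
      [apply gap_spec|]; eauto. }
  destruct (choice (fun c Nc => forall a b, A a /\ next a = c -> A b /\ next b = c -> a <> b ->
     forall n m, (Nc a <= n)%nat -> (Nc b <= m)%nat -> s a n <> s b m)) as [Nb Nb_spec].
  { intro c; destruct (o_initial_countable W c) as [e e_inj].
    apply (countable_ladders_disjoint_tails W s s_ladder _ e).
    - intros a [Aa _]; auto.
    - intros a b [Aa <-] [Ab eb]; apply e_inj; [apply next_spec; auto|].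
      rewrite <- eb; apply next_spec; auto. }
  assert (separated : forall a b, A a -> A b -> olt W a b -> next a <> next b ->
            forall n m, (M b <= m)%nat -> s a n <> s b m).
  { intros a b Aa Ab ab ne n m Mm.
    destruct (next_spec a Aa) as [_ [a_na _]].
    destruct (gap_spec b Ab) as [_ b_gap].
    assert (na_le_gap : ole W (next a) (gap b))
      by (apply (least_above_le_gap W C a b _ (next b)); auto).
    apply olt_neq, (olt_trans W _ a); [exact (ladder_lt W s s_ladder a n (A_limit a Aa))|].
    apply (olt_trans W _ (next a)); [exact a_na|].
    destruct na_le_gap as [lt | ->]; [|exact (M_spec b Ab m Mm)].
    exact (olt_trans W _ _ _ lt (M_spec b Ab m Mm)). }
  exists (fun a => max (Nb (next a) a) (M a)).
  intros a b Aa Ab ab n m Nn Nm; cbv beta in Nn, Nm.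
  destruct (classic (next a = next b)) as [eq|ne].
  - apply (Nb_spec (next a) a b (conj Aa eq_refl) (conj Ab (eq_sym eq)) ab);
      [|rewrite <- eq in Nm]; lia.
  - destruct (olt_total W a b) as [lt|[eq|gt]]; [|contradiction|].
    + apply (separated a b); auto; lia.
    + apply not_eq_sym, (separated b a); auto; lia.
Qed.

Section Extension.

Variable W : Omega1.
Variable s : W -> nat -> W.
Variable A : W -> Prop.
Variable xi : W -> W.
Variable N : W -> nat.
Hypothesis s_ladder : ladder_system W s.
Hypothesis A_limit : forall a, A a -> is_limit W a.
Hypothesis xi_limit : forall a, A a -> is_limit W (xi a).
Hypothesis xi_inj : forall a b, A a -> A b -> xi a = xi b -> a = b.
Hypothesis tails_disjoint : forall a b, A a -> A b -> a <> b ->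
  forall n m, (N a <= n)%nat -> (N b <= m)%nat -> s a n <> s b m.

Definition owner (b x : W) : Prop :=
  A b /\ (x = b \/ exists n, (N b <= n)%nat /\ s b n = x).

Lemma owner_unique b b' x : owner b x -> owner b' x -> b = b'.
Proof.
  intros [Ab bx] [Ab' b'x]; apply NNPP; intro ne.
  destruct bx as [->|[n [Nn <-]]], b'x as [e|[m [Nm e]]].
  - exact (ne e).
  - exact (ladder_not_limit W s s_ladder b' m (A_limit b' Ab') ltac:(rewrite e; auto)).
  - exact (ladder_not_limit W s s_ladder b n (A_limit b Ab) ltac:(rewrite e; auto)).
  - exact (tails_disjoint b b' Ab Ab' ne n m Nn Nm (eq_sym e)).
Qed.

Lemma owner_of_limit b a : is_limit W a -> owner b a -> b = a.
Proof.
  intros La [Ab [<-|[n [_ <-]]]]; [auto|].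
  exfalso; exact (ladder_not_limit W s s_ladder b n (A_limit b Ab) La).
Qed.

Definition extension (o : option W) : option W :=
  match o with
  | None => None
  | Some x =>
      match excluded_middle_informative (exists b, owner b x) with
      | left ex => Some (xi (proj1_sig (constructive_indefinite_description _ ex)))
      | right _ => None
      end
  end.

Lemma extension_owner b x : owner b x -> extension (Some x) = Some (xi b).
Proof.
  intro bx; simpl.
  destruct (excluded_middle_informative (exists b, owner b x)) as [ex|no]; [|exfalso; eauto].
  do 2 f_equal; exact (owner_unique _ _ x (proj2_sig (constructive_indefinite_description _ ex)) bx).
Qed.

Lemma extension_no_owner x : ~ (exists b, owner b x) -> extension (Some x) = None.
Proof.
  intro no; simpl.
  destruct (excluded_middle_informative (exists b, owner b x)); [contradiction|auto].
Qed.

Lemma extension_A a : A a -> extension (Some a) = Some (xi a).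
Proof. intro Aa; apply extension_owner; split; auto. Qed.

Lemma extension_limit_not_A a : is_limit W a -> ~ A a -> extension (Some a) = None.
Proof.
  intros La nAa; apply extension_no_owner; intros [b ba].
  apply nAa; rewrite <- (owner_of_limit b a La ba); exact (proj1 ba).
Qed.

Lemma extension_Some x y : extension (Some x) = Some y -> exists b, owner b x /\ y = xi b.
Proof.
  intro e; destruct (classic (exists b, owner b x)) as [[b bx]|no].
  - rewrite (extension_owner b x bx) in e; injection e; eauto.
  - rewrite (extension_no_owner x no) in e; discriminate.
Qed.

Lemma finite_preimage_outside V : K_open W s V -> V None ->
  exists F, (forall b, In b F -> A b /\ ~ V (Some (xi b))) /\
            (forall b, A b -> ~ V (Some (xi b)) -> In b F).
Proof.
  intros [_ V_cocompact] V_inf.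
  destruct (compact_limits_finite W s s_ladder _ (V_cocompact V_inf)) as [l Hl].
  destruct (finite_preimage (fun b => A b /\ ~ V (Some (xi b))) xi) with l
    as [F [F_sub F_sup]].
  - intros a b [Aa _] [Ab _]; apply xi_inj; auto.
  - exists F; split.
    + intros b inF; exact (proj1 (F_sub b inF)).
    + intros b Ab nV; apply F_sup; [split|apply Hl]; auto.
Qed.

Lemma extension_preimage_open V : K_open W s V ->
  ls_open W s (fun x => V (extension (Some x))).
Proof.
  intros V_open a La Va.
  destruct (classic (A a)) as [Aa|nAa].
  - exists (N a); intros n Nn.
    rewrite (extension_owner a (s a n)); [|split; eauto].
    rewrite <- (extension_A a Aa); exact Va.
  - rewrite (extension_limit_not_A a La nAa) in Va.
    destruct (finite_preimage_outside V V_open Va) as [F [F_sub F_sup]].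
    destruct (ladder_tail_avoids_ladders W s s_ladder a F La) as [M HM].
    { intros b inF; destruct (F_sub b inF) as [Ab _]; split; [auto|].
      intros ->; contradiction. }
    exists M; intros n Mn.
    destruct (classic (exists b, owner b (s a n))) as [[b bx]|no].
    + rewrite (extension_owner b _ bx); apply NNPP; intro nV.
      destruct bx as [Ab [e|[m [_ e]]]].
      * exact (ladder_not_limit W s s_ladder a n La ltac:(rewrite e; auto)).
      * exact (HM n Mn b m (F_sup b Ab nV) (eq_sym e)).
    + rewrite (extension_no_owner _ no); exact Va.
Qed.

Lemma extension_preimage_cocompact V : K_open W s V -> V None ->
  ls_compact W s (fun x => ~ V (extension (Some x))).
Proof.
  intros V_open V_inf.
  destruct (finite_preimage_outside V V_open V_inf) as [F [F_sub F_sup]].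
  apply (compact_of_ladder_closures W s _ F).
  - intros b inF; destruct (F_sub b inF) as [Ab nV].
    rewrite extension_A; auto.
  - intros x nV.
    destruct (extension (Some x)) as [y|] eqn:E; [|contradiction].
    destruct (extension_Some x y E) as [b [[Ab bx] ->]].
    exists b; split; [apply F_sup; auto|].
    destruct bx as [->|[n [_ <-]]]; [left|right]; eauto.
Qed.

Lemma extension_continuous : K_continuous W s extension.
Proof.
  intros V V_open; split.
  - exact (extension_preimage_open V V_open).
  - exact (extension_preimage_cocompact V V_open).
Qed.

End Extension.

Theorem theorem3 (W : Omega1) (s : W -> nat -> W) (A : W -> Prop) (xi : W -> W) :
  ladder_system W s ->
  (forall a, A a -> is_limit W a) ->
  nonstationary W A ->
  (forall a, A a -> is_limit W (xi a)) ->
  (forall a b, A a -> A b -> xi a = xi b -> a = b) ->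
  exists phi : option W -> option W,
    K_continuous W s phi /\
    phi None = None /\
    (forall a, A a -> phi (Some a) = Some (xi a)) /\
    (forall a, is_limit W a -> ~ A a -> phi (Some a) = None).
Proof.
  intros s_ladder A_limit A_nonstat xi_limit xi_inj.
  destruct (nonstationary_disjoint_tails W s A s_ladder A_limit A_nonstat)
    as [N tails_disjoint].
  exists (extension W s A xi N); split; [|split; [|split]].
  - apply extension_continuous; assumption.
  - reflexivity.
  - apply extension_A; assumption.
  - apply extension_limit_not_A; assumption.
Qed.
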